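(* Let $q>0$ and $r\ge 0$ be real numbers. For every integer $n\ge 0$, $$B_n^q(r)=\sum_{k=0}^{n}(-1)^k\,\frac{k!}{k+1}\,W(n,k),$$ where $B_n^q(r)$ and $W(n,k)=W_{q,r}(n,k)$ are as defined in the context.
   Context: The Bernoulli polynomials with a $q$ parameter $B_n^q(r)$ are defined by the formal power series identity in $t$ $$\sum_{n=0}^{\infty}B_n^q(r)\frac{t^n}{n!}=\frac{q\,e^{rt}}{1-e^{qt}}\sum_{k=1}^{\infty}\left(\frac{1-e^{qt}}{q}\right)^k\frac{1}{k}.$$ The $r$-Whitney numbers of the second kind $W(n,k)=W_{q,r}(n,k)$, $0\le k\le n$, are defined by the polynomial identity in $x$: $(qx+r)^n=\sum_{k=0}^n q^k\,W(n,k)\,(x)_k$, where $(x)_k=x(x-1)\cdots(x-k+1)$ is the falling factorial (with $(x)_0=1$). Equivalently, $\sum_{n\ge k}W(n,k)\frac{t^n}{n!}=\frac{e^{rt}}{k!}\left(\frac{e^{qt}-1}{q}\right)^k$. *)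

(* Formal power series over a field R are represented by
   their coefficient sequences nat -> R. *)
From HB Require Import structures.
From mathcomp Require Import all_boot all_order all_algebra.
Set Implicit Arguments. Unset Strict Implicit. Unset Printing Implicit Defensive.
Import Order.TTheory GRing.Theory Num.Theory.
Local Open Scope ring_scope.

Section FPS.
Variable R : fieldType.

Definition fps_mul (f g : nat -> R) : nat -> R :=
  fun n => \sum_(i < n.+1) f i * g (n - i)%N.

Definition fps_one : nat -> R := fun n => (n == 0%N)%:R.

Definition fps_pow (f : nat -> R) (k : nat) : nat -> R := iter k (fps_mul f) fps_one.

Definition fps_exp (a : R) : nat -> R := fun n => a ^+ n / (n`!)%:R.

Definition fps_u (q : R) : nat -> R := fun n => (fps_one n - fps_exp q n) / q.

(* L(t) = sum_{k>=1} u(t)^k / k ; since u has zero constant term the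
   coefficient of t^n only involves k <= n. *)
Definition fps_L (q : R) : nat -> R :=
  fun n => \sum_(1 <= k < n.+1) fps_pow (fps_u q) k n / k%:R.

Definition egf (B : nat -> R) : nat -> R := fun n => B n / (n`!)%:R.

(* The defining identity of the Bernoulli polynomials with parameter q:
     sum B_n t^n/n! = q e^{rt} / (1 - e^{qt}) * L(t),
   stated after clearing the (non-zero-divisor) denominator:
     (1 - e^{qt}) * sum B_n t^n/n! = q e^{rt} * L(t). *)
Definition is_qBernoulli (q r : R) (B : nat -> R) : Prop :=
  forall n, fps_mul (fun m => fps_one m - fps_exp q m) (egf B) n
            = q * fps_mul (fps_exp r) (fps_L q) n.

Definition falling (k : nat) : {poly R} := \prod_(i < k) ('X - (i%:R)%:P).

Definition is_rWhitney2 (q r : R) (W : nat -> nat -> R) : Prop :=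
  forall n, (q *: 'X + r%:P) ^+ n = \sum_(k < n.+1) (q ^+ k * W n k) *: falling k.

End FPS.

From mathcomp Require Import all_boot all_order all_algebra.
From mathcomp Require Import ring zify.

(* Since q u(t) = 1 - e^{qt} and L(t) = u(t) \sum_k u(t)^k / (k+1), the defining
   identity of B_n becomes, after cancelling u(t) (t times a unit),
     \sum_n B_n t^n / n! = e^{rt} \sum_k u(t)^k / (k+1).
   By the binomial theorem the coefficient of t^n in e^{rt} u(t)^k is
   q^-k \sum_j (-1)^j C(k,j) (r + jq)^n / n!, and this alternating sum is the
   k-th finite difference of (r + xq)^n, which the Whitney expansion in falling
   factorials evaluates to (-1)^k k! q^k W(n,k).  Power series are handled as
   polynomials modulo t^N, with N = n + 2 so that the cancellation of u(t)
   still determines the coefficient of t^n. *)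

Set Implicit Arguments.
Unset Strict Implicit.
Unset Printing Implicit Defensive.

Import GRing.Theory Num.Theory.
Local Open Scope ring_scope.

Lemma bin_ffact_shift i d l : (l <= d)%N ->
  ('C(i + d, i + l) * (i + l) ^_ i = (i + d) ^_ i * 'C(d, l))%N.
Proof.
move=> le_ld.
(* Both sides multiplied by l! (d - l)! equal (i + d)!. *)
apply/eqP; rewrite -(eqn_pmul2r (fact_gt0 l)) -(eqn_pmul2r (fact_gt0 (d - l))).
have fact_il := ffact_fact (leq_addr l i); rewrite addKn in fact_il.
have fact_id := ffact_fact (leq_addr d i); rewrite addKn in fact_id.
have bin_id := @bin_fact (i + d) (i + l); rewrite subnDl leq_add2l in bin_id.
rewrite -(mulnA _ 'C(d, l)) -(mulnA _ ('C(d, l) * _)) -(mulnA 'C(d, l)).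
rewrite bin_fact // fact_id -(mulnA _ ((i + l) ^_ i)) fact_il -mulnA.
by rewrite bin_id.
Qed.

Section AlternatingBinomialSums.
Variable R : comPzRingType.

Lemma sum_alt_bin d : \sum_(l < d.+1) (-1) ^+ l * 'C(d, l)%:R = (d == 0)%:R :> R.
Proof.
have := exprD1n (-1 : R) d; rewrite addNr expr0n => ->.
by apply: eq_bigr => l _; rewrite mulr_natr.
Qed.

Lemma sum_alt_bin_ffact k i :
  \sum_(j < k.+1) (-1) ^+ j * 'C(k, j)%:R * (j ^_ i)%:R
    = (i == k)%:R * ((-1) ^+ k * k`!%:R) :> R.
Proof.
have [lt_ki | le_ik] := ltnP k i.
  rewrite big1 ?(gtn_eqF lt_ki) ?mul0r // => j _.
  by rewrite ffact_small ?mulr0 // (leq_ltn_trans _ lt_ki) // -ltnS.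
rewrite -(subnKC le_ik); move: (k - i)%N => d {k le_ik}.
rewrite -addnS big_split_ord /= big1 ?add0r => [|j _]; last first.
  by rewrite ffact_small ?mulr0.
rewrite (eq_bigr (fun l : 'I_d.+1 =>
    (-1) ^+ i * ((i + d) ^_ i)%:R * ((-1) ^+ l * 'C(d, l)%:R))) => [|l _]; last first.
  by rewrite /= exprD -mulrA -natrM bin_ffact_shift ?leq_ord // natrM; ring.
rewrite -mulr_sumr sum_alt_bin.
case: d => [|d]; first by rewrite addn0 eqxx ffactnn mulr1 mul1r.
by rewrite mulr0 (@ltn_eqF i) ?mul0r // -addSnnS leq_addr.
Qed.

End AlternatingBinomialSums.

Section Whitney.
Variable R : fieldType.

Lemma horner_falling i j : (falling R i).[j%:R] = (j ^_ i)%:R.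
Proof.
rewrite /falling horner_prod ffact_prod natr_prod.
have [le_ij | lt_ji] := leqP i j.
  apply: eq_bigr => l _; rewrite hornerXsubC natrB //.
  exact: ltnW (leq_trans (ltn_ord l) le_ij).
rewrite [LHS](bigD1 (Ordinal lt_ji)) //= [RHS](bigD1 (Ordinal lt_ji)) //=.
by rewrite subnn hornerXsubC subrr !mul0r.
Qed.

(* Expanding (r + j q)^n in the falling factorials of j, only the term of
   degree k survives the alternating sum. *)
Lemma rWhitney2_finite_difference (q r : R) W n k :
  is_rWhitney2 q r W -> (k <= n)%N ->
  \sum_(j < k.+1) (-1) ^+ j * 'C(k, j)%:R * (r + j%:R * q) ^+ n
    = (-1) ^+ k * k`!%:R * q ^+ k * W n k.
Proof.
move=> hW le_kn.
have eval_j j : (r + j%:R * q) ^+ n = \sum_(i < n.+1) q ^+ i * W n i * (j ^_ i)%:R.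
  have := congr1 (horner^~ (j%:R : R)) (hW n).
  rewrite horner_exp horner_sum hornerD hornerZ hornerX hornerC addrC mulrC => ->.
  by apply: eq_bigr => i _; rewrite hornerZ horner_falling.
under eq_bigr => j _ do rewrite eval_j mulr_sumr.
rewrite exchange_big /=.
under eq_bigr => i _ do under eq_bigr => j _ do rewrite mulrCA.
under eq_bigr => i _ do rewrite -mulr_sumr sum_alt_bin_ffact.
rewrite (bigD1 (Ordinal (le_kn : (k < n.+1)%N))) //= eqxx mul1r big1 ?addr0.
  by rewrite mulrC mulrA.
by move=> i /negbTE ne_ik; rewrite -val_eqE /= in ne_ik; rewrite ne_ik mul0r mulr0.
Qed.

End Whitney.

Section PolyModXn.
Variable R : fieldType.
Implicit Types p x y : {poly R}.

Lemma coef_modXn N p i : (p %% 'X^N)`_i = if (i < N)%N then p`_i else 0.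
Proof. by rewrite -Pdiv.IdomainMonic.take_poly_modp coef_take_poly. Qed.

Lemma coef_expr_small p k m : p`_0 = 0 -> (m < k)%N -> (p ^+ k)`_m = 0.
Proof.
move=> p0 lt_mk; have := poly_take_drop 1 p.
rewrite (_ : take_poly 1 p = 0) ?add0r => [<-|]; last first.
  by apply/polyP => i; rewrite coef_take_poly coef0; case: i => [|i].
by rewrite exprMn -exprM mul1n coefMXn lt_mk.
Qed.

Lemma modXn_mulI p x y M : p`_0 = 0 -> p`_1 != 0 ->
  (p * x) %% 'X^(M.+1) = (p * y) %% 'X^(M.+1) -> x %% 'X^M = y %% 'X^M.
Proof.
move=> p0 p1 eq_pxy; apply/polyP => m; rewrite !coef_modXn.
case: ltnP => // lt_mM; elim/ltn_ind: m lt_mM => m IHm lt_mM.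
(* The coefficient of X^m.+1 in p * x is p`_1 * x`_m plus terms in lower
   coefficients of x, which agree with those of y by induction. *)
have := congr1 (coefp m.+1) eq_pxy; rewrite /= !coef_modXn ltnS lt_mM !coefM.
rewrite !big_ord_recl p0 !mul0r !add0r /= subSS subn0.
rewrite [X in _ + X = _](eq_bigr (fun i : 'I_m =>
   p`_(lift ord0 (lift ord0 i)) * y`_(m.+1 - lift ord0 (lift ord0 i))));
  last by move=> i _; rewrite IHm //= /bump /=; have := ltn_ord i; lia.
by move/addIr/mulfI; apply.
Qed.

End PolyModXn.

Definition trunc {R : fieldType} (N : nat) (f : nat -> R) : {poly R} :=
  \poly_(i < N) f i.

Section Truncation.
Variables (R : fieldType) (N : nat).
Hypothesis R_char0 : [pchar R] =i pred0.
Implicit Types (f g : nat -> R) (a b : R).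

Lemma trunc_fps_mul f g : trunc N (fps_mul f g) = (trunc N f * trunc N g) %% 'X^N.
Proof.
apply/polyP => m; rewrite coef_modXn coef_poly; case: ifP => // lt_mN.
rewrite coefM; apply: eq_bigr => i _; rewrite !coef_poly.
by rewrite (leq_ltn_trans (leq_ord i) lt_mN) (leq_ltn_trans (leq_subr i m) lt_mN).
Qed.

Lemma trunc_fps_pow f k : trunc N (fps_pow f k) = trunc N f ^+ k %% 'X^N.
Proof.
elim: k => [|k IHk]; last by rewrite exprS -modp_mul -IHk -trunc_fps_mul.
by apply/polyP => m; rewrite coef_modXn coef_poly coef1.
Qed.

Lemma pchar0_natf_neq0 k : (0 < k)%N -> k%:R != 0 :> R.
Proof. by rewrite (pcharf0P R).1 // -lt0n. Qed.

Lemma fps_mul_exp a b m : fps_mul (fps_exp a) (fps_exp b) m = fps_exp (a + b) m.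
Proof.
rewrite /fps_mul /fps_exp addrC exprDn mulr_suml; apply: eq_bigr => i _.
have le_im : (i <= m)%N := leq_ord i.
rewrite -(mulr_natr _ 'C(m, i)) -(bin_fact le_im) !natrM.
have [fact_i fact_mi bin_mi] :
    [/\ i`!%:R != 0 :> R, (m - i)`!%:R != 0 :> R & 'C(m, i)%:R != 0 :> R].
  by split; apply: pchar0_natf_neq0; rewrite ?fact_gt0 ?bin_gt0.
by field; rewrite fact_i fact_mi bin_mi.
Qed.

Lemma trunc_exp_mul a b :
  (trunc N (fps_exp a) * trunc N (fps_exp b)) %% 'X^N = trunc N (fps_exp (a + b)).
Proof. by rewrite -trunc_fps_mul; apply/polyP => m; rewrite !coef_poly fps_mul_exp. Qed.

Lemma trunc_exp_pow a j : trunc N (fps_exp a) ^+ j %% 'X^N = trunc N (fps_exp (j%:R * a)).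
Proof.
elim: j => [|j IHj]; last by rewrite exprS -modp_mul IHj trunc_exp_mul mulrS mulrDl mul1r.
apply/polyP => m; rewrite coef_modXn coef_poly coef1 mul0r /fps_exp expr0n.
by case: m => [|m]; rewrite ?divr1 ?mul0r; case: ifP.
Qed.

Lemma trunc_one_sub_exp a : (0 < N)%N ->
  trunc N (fun m => fps_one R m - fps_exp a m) = 1 - trunc N (fps_exp a).
Proof.
move=> N_gt0; apply/polyP => m; rewrite coefB coef1 !coef_poly.
by case: ltnP => // le_Nm; rewrite subr0 eqn0Ngt (leq_trans N_gt0 le_Nm).
Qed.

Variable q : R.
Hypothesis q_neq0 : q != 0.

Lemma scale_trunc_fps_u :
  q *: trunc N (fps_u q) = trunc N (fun m => fps_one R m - fps_exp q m).
Proof.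
apply/polyP => m; rewrite coefZ !coef_poly.
by case: ifP => _; [rewrite mulrC divfK | rewrite mulr0].
Qed.

Lemma coef_trunc_fps_u0 : (trunc N (fps_u q))`_0 = 0.
Proof.
by rewrite coef_poly /fps_u /fps_one /fps_exp expr0 divr1 subrr mul0r if_same.
Qed.

Lemma coef_trunc_fps_u1 : (1 < N)%N -> (trunc N (fps_u q))`_1 = -1.
Proof.
move=> N_gt1.
by rewrite coef_poly N_gt1 /fps_u /fps_one /fps_exp expr1 divr1 sub0r mulNr divff.
Qed.

Lemma coef_exp_mul_fps_u_pow r k m : (m < N)%N ->
  (trunc N (fps_exp r) * trunc N (fps_u q) ^+ k)`_m
    = q ^- k * \sum_(j < k.+1) (-1) ^+ j * 'C(k, j)%:R * fps_exp (r + j%:R * q) m.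
Proof.
move=> lt_mN.
have coef_mod (p : {poly R}) : (p %% 'X^N)`_m = p`_m by rewrite coef_modXn lt_mN.
have -> : trunc N (fps_u q) = q^-1 *: (1 - trunc N (fps_exp q)).
  rewrite -trunc_one_sub_exp ?(leq_ltn_trans _ lt_mN) // -scale_trunc_fps_u.
  by rewrite scalerA mulVf // scale1r.
rewrite exprZn exprVn -scalerAr coefZ; congr (_ * _).
rewrite addrC exprD1n mulr_sumr coef_sum; apply: eq_bigr => j _.
rewrite -scaleN1r exprZn [in LHS]mulrnAr coefMn -scalerAr coefZ.
rewrite -coef_mod -modp_mul trunc_exp_pow trunc_exp_mul coef_poly lt_mN.
by rewrite -mulrnAl -mulr_natr.
Qed.

Lemma trunc_fps_L :
  trunc N (fps_L q) =
  (trunc N (fps_u q) * \sum_(k < N.-1) (k.+1)%:R^-1 *: trunc N (fps_u q) ^+ k) %% 'X^N.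
Proof.
set u := trunc N (fps_u q).
apply/polyP => m; rewrite coef_modXn coef_poly; case: ifP => // lt_mN.
have coef_pow k : (u ^+ k)`_m = fps_pow (fps_u q) k m.
  have := congr1 (coefp m) (trunc_fps_pow (fps_u q) k).
  by rewrite /= coef_modXn coef_poly lt_mN.
have le_mN1 : (m <= N.-1)%N by rewrite -ltnS prednK ?(leq_ltn_trans _ lt_mN).
rewrite /fps_L big_add1 succnK big_mkord.
rewrite (big_ord_widen _ (fun k => fps_pow (fps_u q) k.+1 m / k.+1%:R) le_mN1).
rewrite big_mkcond mulr_sumr coef_sum; apply: eq_bigr => k _.
rewrite -scalerAr coefZ -exprS coef_pow [RHS]mulrC.
case: ltnP => // le_mk.
by rewrite -coef_pow coef_expr_small ?coef_trunc_fps_u0 ?mul0r.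
Qed.

Lemma trunc_qBernoulli r B : is_qBernoulli q r B ->
  let u := trunc N (fps_u q) in
  (u * trunc N (egf B)) %% 'X^N
    = (u * (trunc N (fps_exp r) * \sum_(k < N.-1) (k.+1)%:R^-1 *: u ^+ k)) %% 'X^N.
Proof.
move=> hB u; apply: (scalerI q_neq0).
have trunc_hB : trunc N (fps_mul (fun m => fps_one R m - fps_exp q m) (egf B))
              = q *: trunc N (fps_mul (fps_exp r) (fps_L q)).
  by apply/polyP => m; rewrite coefZ !coef_poly; case: ifP; rewrite ?hB ?mulr0.
rewrite -!modpZl [in LHS]scalerAl scale_trunc_fps_u -trunc_fps_mul trunc_hB.
by rewrite trunc_fps_mul trunc_fps_L modp_mul modpZl mulrCA.
Qed.

End Truncation.

Theorem mainTheorem1 (R : realFieldType) (q r : R) (hq : 0 < q) (hr : 0 <= r)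
  (B : nat -> R) (W : nat -> nat -> R)
  (hB : is_qBernoulli q r B) (hW : is_rWhitney2 q r W) (n : nat) :
  B n = \sum_(k < n.+1) (-1) ^+ k * ((k`!)%:R / (k.+1)%:R) * W n k.
Proof.
have q_neq0 : q != 0 := lt0r_neq0 hq.
pose u := trunc n.+2 (fps_u q).
have u0 : u`_0 = 0 := coef_trunc_fps_u0 _ q.
have u1 : u`_1 != 0 by rewrite coef_trunc_fps_u1 // oppr_eq0 oner_eq0.
have := congr1 (coefp n) (modXn_mulI u0 u1 (trunc_qBernoulli _ q_neq0 hB)).
rewrite /= !coef_modXn ltnSn coef_poly leqnSn.
have fact_neq0 : n`!%:R != 0 :> R by rewrite pnatr_eq0 -lt0n fact_gt0.
rewrite /egf => /(canRL (divfK fact_neq0)) ->.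
rewrite mulr_sumr coef_sum mulr_suml; apply: eq_bigr => k _.
rewrite -scalerAr coefZ (coef_exp_mul_fps_u_pow (@pchar_num R) q_neq0) //.
under eq_bigr => j _ do rewrite /fps_exp mulrA.
rewrite -mulr_suml (rWhitney2_finite_difference hW (leq_ord k)).
by field; rewrite fact_neq0 expf_neq0 // addrC natr1 pnatr_eq0.
Qed.
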